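(* Let $G$ be a dense $K_4^3\cup e$-free $3$-graph with $\lambda(G)>\frac{\sqrt3}{18}$. Then $G$ is $X_4$-free.
   Context: $K_4^3\cup e$ is the $3$-graph on $\{1,\dots,7\}$ with edges $\{123,124,134,234,567\}$. For a $3$-graph $G$ on $[n]$, $\lambda(G)=\max\{\sum_{e\in E(G)}\prod_{i\in e}x_i:\sum_ix_i=1,x_i\ge0\}$. An $r$-graph $G$ is dense if $\lambda(G')<\lambda(G)$ for every proper subgraph $G'$ of $G$. $X_i$ is the $3$-graph on $[2i+2]$ in which $\{1,2,2j+1,2j+2\}$ spans a $K_4^3$ for each $1\le j\le i$, and no other edges. *)

From HB Require Import structures.
From mathcomp Require Import all_boot all_order all_algebra.
From mathcomp Require Import all_classical all_reals.
Set Implicit Arguments. Unset Strict Implicit. Unset Printing Implicit Defensive.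
Import Order.TTheory GRing.Theory Num.Theory.
Local Open Scope classical_set_scope.
Local Open Scope ring_scope.

Definition is_3graph (n : nat) (E : {set {set 'I_n}}) : Prop :=
  forall e, e \in E -> #|e| = 3%N.

Definition lagr (R : realType) (n : nat) (V : {set 'I_n})
    (E : {set {set 'I_n}}) : R :=
  sup [set y : R | exists x : 'I_n -> R,
        [/\ (forall i, 0 <= x i), (forall i, i \notin V -> x i = 0),
            \sum_(i in V) x i = 1 &
            y = \sum_(e in E) \prod_(i in e) x i]].

Definition lambda (R : realType) (n : nat) (E : {set {set 'I_n}}) : R :=
  lagr R [set: 'I_n]%SET E.

Definition dense (R : realType) (n : nat) (E : {set {set 'I_n}}) : Prop :=
  forall (V' : {set 'I_n}) (E' : {set {set 'I_n}}),
    E' \subset E -> (forall e, e \in E' -> e \subset V') ->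
    (V' != [set: 'I_n]%SET) || (E' != E) ->
    lagr R V' E' < lambda R E.

(* G contains a copy of F (not necessarily induced): an injective vertex
   map sending every edge of F to an edge of G.  F-free = no copy. *)
Definition hcontains (m n : nat) (F : {set {set 'I_m}}) (E : {set {set 'I_n}})
  : Prop :=
  exists f : 'I_m -> 'I_n, injective f /\ forall e, e \in F -> f @: e \in E.

Definition hfree (m n : nat) (F : {set {set 'I_m}}) (E : {set {set 'I_n}})
  : Prop := ~ hcontains F E.

(* K_4^3 u e on {1..7} (here 0..6): edges 123,124,134,234,567. *)
Definition K43e : {set {set 'I_7}} :=
  [set e : {set 'I_7} | (#|e| == 3%N) &&
     ((e \subset [set i : 'I_7 | (i < 4)%N]%SET) ||
      (e == [set i : 'I_7 | (4 <= i)%N]%SET))].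

(* X_i on [2i+2] (here 0..2i+1): {1,2,2j+1,2j+2} spans K_4^3 for 1<=j<=i;
   0-indexed: {0,1,2j,2j+1}. *)
Definition X (k : nat) : {set {set 'I_(2 * k + 2)}} :=
  [set e : {set 'I_(2 * k + 2)} | (#|e| == 3%N) &&
     [exists j : 'I_k.+1, (0 < j)%N &&
        (e \subset [set i : 'I_(2 * k + 2) |
           [|| (i == 0%N :> nat), (i == 1%N :> nat),
               (i == (2 * j)%N :> nat) | (i == (2 * j).+1 :> nat)]]%SET)]].

From HB Require Import structures.
From mathcomp Require Import all_boot all_order all_algebra.
From mathcomp Require Import all_classical all_reals.
From mathcomp Require Import lra zify.
Set Implicit Arguments. Unset Strict Implicit. Unset Printing Implicit Defensive.
Import Order.TTheory GRing.Theory Num.Theory.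
Local Open Scope ring_scope.

(* Let {a, b} be the centre of a copy of X_4 in G.  Each of the four K_4^3
   blocks of the copy meets every edge of G, since a disjoint edge would
   complete it to a K_4^3 u e.  An edge avoiding a and b would thus contain a
   private vertex of each block, i.e. four vertices; so {a, b} covers G.
   Splitting the Lagrangian polynomial by which of a, b an edge contains, and
   bounding each part with  sum over k-subsets of U <= (sum_U x)^k / k!,  gives
   lambda(G) <= max (x_a x_b r + (x_a + x_b) r^2/2) = sqrt3/18, where r is the
   weight off {a, b}. *)

Definition lagr_poly (R : comPzRingType) (n : nat) (F : {set {set 'I_n}})
    (x : 'I_n -> R) : R :=
  \sum_(e in F) \prod_(i in e) x i.

Definition link (n : nat) (u : 'I_n) (F : {set {set 'I_n}}) : {set {set 'I_n}} :=
  [set e :\ u | e in F].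

Section LagrangianPolynomial.

Variables (R : comPzRingType) (n : nat) (x : 'I_n -> R).

Lemma lagr_poly_link (u : 'I_n) (F : {set {set 'I_n}}) :
  (forall e, e \in F -> u \in e) ->
  lagr_poly F x = x u * lagr_poly (link u F) x.
Proof.
move=> Fu; rewrite /lagr_poly big_imset /=; last first.
  move=> e1 e2 /Fu e1u /Fu e2u /= e12.
  by rewrite -(finset.setD1K e1u) -(finset.setD1K e2u) e12.
rewrite mulr_sumr; apply: eq_bigr => e /Fu eu.
by rewrite (bigD1 u) //=; congr (_ * _); apply: eq_bigl => i; rewrite !inE andbC.
Qed.

(* Each [k.+1]-edge is counted once for each of its vertices. *)
Lemma lagr_poly_double_count (k : nat) (U : {set 'I_n}) (F : {set {set 'I_n}}) :
  (forall e, e \in F -> e \subset U /\ #|e| = k.+1) ->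
  k.+1%:R * lagr_poly F x =
    \sum_(u in U) x u * lagr_poly (link u [set e in F | u \in e]) x.
Proof.
move=> FU; rewrite /lagr_poly mulr_sumr.
rewrite (eq_bigr (fun e : {set 'I_n} => \sum_(u in e) \prod_(i in e) x i)); last first.
  by move=> e /FU[_ ek]; rewrite sumr_const -ek mulr_natl.
rewrite (exchange_big_dep (mem U)) /=; last first.
  by move=> e u /FU[/fintype.subsetP eU _] /eU.
apply: eq_bigr => u _; rewrite -lagr_poly_link; last by move=> e; rewrite inE => /andP[].
by apply: eq_bigl => e; rewrite inE.
Qed.

End LagrangianPolynomial.

Section LagrangianBounds.

Variables (R : numFieldType) (n : nat) (x : 'I_n -> R).
Hypothesis x_ge0 : forall i, 0 <= x i.

Lemma lagr_poly_uniform_le (k : nat) (U : {set 'I_n}) (F : {set {set 'I_n}}) :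
  (forall e, e \in F -> e \subset U /\ #|e| = k) ->
  lagr_poly F x <= (\sum_(i in U) x i) ^+ k / k`!%:R.
Proof.
elim: k U F => [|k IHk] U F FU.
  have F0 e : e \in F -> e = finset.set0.
    by move=> /FU[_ /eqP]; rewrite cards_eq0 => /eqP.
  have /subset_leq_card : F \subset [set finset.set0].
    by apply/fintype.subsetP => e /F0 ->; rewrite inE.
  rewrite cards1 expr0 fact0 divr1 /lagr_poly.
  rewrite (eq_bigr (fun=> 1)); last by move=> e /F0 ->; rewrite big_set0.
  by rewrite sumr_const; case: #|_| => [|[]] // _; rewrite ?mulr0n ?mulr1n.
set r := \sum_(i in U) x i.
have r_ge0 : 0 <= r by apply: sumr_ge0.
have link_le u : lagr_poly (link u [set e in F | u \in e]) x <= r ^+ k / k`!%:R.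
  apply: IHk => ? /imsetP[e]; rewrite inE => /andP[/FU[eU ek] ue] ->.
  split; first exact: fintype.subset_trans (subsetDl _ _) eU.
  by move: ek; rewrite (cardsD1 u) ue => -[].
have le_S : k.+1%:R * lagr_poly F x <= r * (r ^+ k / k`!%:R).
  rewrite (lagr_poly_double_count _ FU) /r mulr_suml.
  by apply: ler_sum => u _; apply: ler_wpM2l.
by rewrite factS natrM invfM mulrA mulrAC ler_pdivlMr ?ltr0n // mulrC exprS -mulrA.
Qed.

Lemma lagr_poly_star_le (u : 'I_n) (m : nat) (U : {set 'I_n})
    (F : {set {set 'I_n}}) :
  (forall e, e \in F -> [/\ u \in e, e :\ u \subset U & #|e| = m.+1]) ->
  lagr_poly F x <= x u * ((\sum_(i in U) x i) ^+ m / m`!%:R).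
Proof.
move=> FU; rewrite (@lagr_poly_link _ _ _ u) => [|e /FU[] //].
apply: ler_wpM2l => //; apply: lagr_poly_uniform_le => ? /imsetP[e /FU[ue eU em] ->].
by split=> //; move: em; rewrite (cardsD1 u) ue => -[].
Qed.

Lemma lagr_poly_cover2_le (a b : 'I_n) (G : {set {set 'I_n}}) :
  a != b -> is_3graph G -> (forall e, e \in G -> (a \in e) || (b \in e)) ->
  lagr_poly G x <= x a * x b * (\sum_(i in ~: [set a; b]) x i)
                   + (x a + x b) * ((\sum_(i in ~: [set a; b]) x i) ^+ 2 / 2).
Proof.
move=> ab G3 cover; set U := ~: [set a; b].
have sub_U (e : {set 'I_n}) : a \notin e -> b \notin e -> e \subset U.
  move=> ae be; apply/fintype.subsetP => i ie; rewrite !inE.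
  by apply/negP => /orP[] /eqP ie'; [move: ae | move: be]; rewrite -ie' ie.
have -> : lagr_poly G x = lagr_poly [set e in G | (a \in e) && (b \in e)] x
    + lagr_poly [set e in G | (a \in e) && (b \notin e)] x
    + lagr_poly [set e in G | a \notin e] x.
  rewrite /lagr_poly (bigID (fun e : {set 'I_n} => a \in e)) /=.
  rewrite (bigID (fun e : {set 'I_n} => b \in e)) /=.
  by congr (_ + _ + _); apply: eq_bigl => e; rewrite !inE ?andbA.
rewrite mulrDl addrA; apply: lerD; first apply: lerD.
- rewrite (@lagr_poly_link _ _ _ a) => [|e]; last by rewrite inE => /and3P[].
  rewrite -mulrA; apply: ler_wpM2l => //.
  rewrite -[X in _ <= _ * X]divr1 -[X in _ <= _ * (X / _)]expr1.
  apply: lagr_poly_star_le => ? /imsetP[e]; rewrite inE => /and3P[eG ae be] ->.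
  split; [by rewrite !inE eq_sym ab | by apply: sub_U; rewrite !inE eqxx ?andbF |].
  by move: (G3 e eG); rewrite (cardsD1 a) ae => -[].
- apply: lagr_poly_star_le => e; rewrite inE => /and3P[eG ae be].
  by split; [|apply: sub_U; rewrite !inE ?eqxx ?(negPf be) ?andbF|exact: G3].
- apply: lagr_poly_star_le => e; rewrite inE => /andP[eG ae].
  have be : b \in e by move: (cover e eG); rewrite (negPf ae).
  by split; [|apply: sub_U; rewrite !inE ?eqxx ?(negPf ae) ?andbF|exact: G3].
Qed.

End LagrangianBounds.

(* With [t = p + q] the left side is at most [t^2 r/4 + t r^2/2 = (r - r^3)/4],
   and [sqrt3/18 - (r - r^3)/4 = (3r - sqrt3)^2 (r + 2 sqrt3/3) / 36]. *)
Lemma cover2_poly_le (R : rcfType) (p q r : R) :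
  0 <= p -> 0 <= q -> 0 <= r -> p + q + r = 1 ->
  p * q * r + (p + q) * (r ^+ 2 / 2) <= Num.sqrt 3 / 18.
Proof.
move=> p_ge0 q_ge0 r_ge0 pqr1.
set s := Num.sqrt 3.
have s_ge0 : 0 <= s by apply: sqrtr_ge0.
have s2 : s ^+ 2 = 3 by rewrite sqr_sqrtr.
have amgm : p * q * r <= (p + q) ^+ 2 / 4 * r.
  by apply: ler_wpM2r => //; have := sqr_ge0 (p - q); nra.
have : 0 <= (3 * r - s) ^+ 2 * (r + 2 * s / 3).
  by apply: mulr_ge0; [exact: sqr_ge0 | nra].
nra.
Qed.

Definition vertex_cover (n : nat) (G : {set {set 'I_n}}) (C : {set 'I_n}) : Prop :=
  forall e, e \in G -> ~~ [disjoint e & C].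

Lemma lambda_le_vertex_cover2 (R : realType) (n : nat) (G : {set {set 'I_n}})
    (C : {set 'I_n}) :
  is_3graph G -> vertex_cover G C -> #|C| = 2 -> lambda R G <= Num.sqrt 3 / 18.
Proof.
move=> G3 coverC /eqP/cards2P[a [b [ab C_ab]]].
have cover e : e \in G -> (a \in e) || (b \in e).
  move=> /coverC /pred0Pn[v /andP[ve]]; rewrite /= C_ab !inE.
  by case/orP=> /eqP <-; apply/orP; [left | right].
apply: ge_sup.
  exists (lagr_poly G (fun i => (i == a)%:R)), (fun i => (i == a)%:R); split=> //.
  - by move=> i; rewrite inE.
  - by rewrite (bigD1 a) ?inE //= eqxx big1 ?addr0 // => i /andP[_ /negPf ->].
move=> _ [y [y_ge0 _ sum_y ->]].
apply: le_trans (lagr_poly_cover2_le y_ge0 ab G3 cover) _.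
apply: cover2_poly_le => //; first exact: sumr_ge0.
have sum_ab : \sum_(i in [set a; b]) y i = y a + y b.
  by rewrite big_setU1 ?inE //= big_set1.
rewrite -sum_y -sum_ab [RHS](bigID (mem [set a; b])) /=.
by congr (_ + _); apply: eq_bigl => i; rewrite !inE.
Qed.

Lemma card_ord_mem (m : nat) (s : seq nat) :
  uniq s -> all (fun i => i < m)%N s -> #|[set i : 'I_m | val i \in s]| = size s.
Proof.
move=> s_uniq s_lt; rewrite cardsE cardE -(size_map val).
apply: perm_size; apply: uniq_perm => //.
  by rewrite map_inj_uniq ?enum_uniq //; exact: val_inj.
move=> i; apply/mapP/idP => [[j] | i_s]; first by rewrite mem_enum => js ->.
by exists (Ordinal (allP s_lt i i_s)); rewrite ?mem_enum.
Qed.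

(* An edge [e] disjoint from the [K_4^3] spanned by [Q] would complete it to a
   [K_4^3 u e]: send [0..3] onto [Q] and [4..6] onto [e]. *)
Lemma K43e_free_meets_K4 (n : nat) (G : {set {set 'I_n}}) (Q e : {set 'I_n}) :
  is_3graph G -> hfree K43e G -> #|Q| = 4%N ->
  (forall s : {set 'I_n}, s \subset Q -> #|s| = 3%N -> s \in G) ->
  e \in G -> ~~ [disjoint e & Q].
Proof.
move=> G3 freeG card_Q K4_Q eG; apply/negP => eQ; apply: freeG.
have card_e := G3 e eG.
have [v0 _] : exists v0, v0 \in e by apply/card_gt0P; rewrite card_e.
pose l := enum Q ++ enum e; pose g (i : 'I_7) := nth v0 l i.
have size_l : size l = 7%N by rewrite size_cat -!cardE card_Q card_e.
have g_inj : injective g.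
  have l_uniq : uniq l.
    rewrite cat_uniq !enum_uniq /= andbT; apply/hasPn => v; rewrite !mem_enum.
    by move=> ve; rewrite (disjointFr eQ ve).
  by move=> i j /eqP; rewrite nth_uniq ?size_l // => /eqP /val_inj.
have gQ (i : 'I_7) : (i < 4)%N -> g i \in Q.
  by move=> i4; rewrite -mem_enum /g nth_cat -cardE card_Q i4 mem_nth // -cardE card_Q.
have ge (i : 'I_7) : (4 <= i)%N -> g i \in e.
  move=> i4; rewrite -mem_enum /g nth_cat -cardE card_Q ltnNge i4 /= mem_nth //.
  by rewrite -cardE card_e; have := ltn_ord i; lia.
exists g; split=> // t; rewrite inE => /andP[/eqP t3 /orP[tQ | /eqP t_e]].
  apply: K4_Q; last by rewrite card_imset.
  apply/fintype.subsetP => ? /imsetP[i it ->]; apply: gQ.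
  by move/fintype.subsetP: tQ => /(_ i it); rewrite inE.
suff -> : g @: t = e by [].
apply/eqP; rewrite eqEcard card_imset // t3 card_e leqnn andbT.
by apply/fintype.subsetP => ? /imsetP[i]; rewrite t_e inE => /ge gie ->.
Qed.

Definition Xblock (k j : nat) : {set 'I_(2 * k + 2)} :=
  [set i : 'I_(2 * k + 2) | [|| (i == 0%N :> nat), (i == 1%N :> nat),
                               (i == (2 * j)%N :> nat) | (i == (2 * j).+1 :> nat)]].

Definition Xcentre (k : nat) : {set 'I_(2 * k + 2)} :=
  [set i : 'I_(2 * k + 2) | (i < 2)%N].

Lemma card_Xblock (k j : nat) : (0 < j <= k)%N -> #|Xblock k j| = 4%N.
Proof.
move=> j_k.
have -> : Xblock k j = [set i : 'I_(2 * k + 2) | val i \in [:: 0; 1; 2 * j; (2 * j).+1]%N].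
  by apply/setP => i; rewrite !inE.
by rewrite card_ord_mem //= ?inE; lia.
Qed.

Lemma card_Xcentre (k : nat) : #|Xcentre k| = 2%N.
Proof.
have -> : Xcentre k = [set i : 'I_(2 * k + 2) | val i \in [:: 0; 1]%N].
  by apply/setP => -[[|[|i]] i_lt]; rewrite !inE.
by rewrite card_ord_mem //= ?inE; lia.
Qed.

Section XCopy.

Variables (n k : nat) (G : {set {set 'I_n}}) (f : 'I_(2 * k + 2) -> 'I_n).
Hypotheses (f_inj : injective f) (f_copy : forall e, e \in X k -> f @: e \in G).

Lemma X_copy_block_sub (j : 'I_k.+1) : (0 < j)%N ->
  forall s : {set 'I_n}, s \subset f @: Xblock k j -> #|s| = 3%N -> s \in G.
Proof.
move=> j0 s /fintype.subsetP s_block s3.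
have s_img : f @: (f @^-1: s) = s.
  apply/setP => v; apply/imsetP/idP => [[i] | vs]; first by rewrite inE => ? ->.
  by have /imsetP[i _ vfi] := s_block v vs; exists i; rewrite // inE -vfi.
rewrite -s_img; apply: f_copy; rewrite inE -(card_imset _ f_inj) s_img s3 eqxx /=.
apply/existsP; exists j; rewrite j0; apply/fintype.subsetP => i; rewrite inE.
by move=> /s_block /imsetP[i' i'B /f_inj ->].
Qed.

Lemma card_X_copy_block (j : nat) : (0 < j <= k)%N -> #|f @: Xblock k j| = 4%N.
Proof. by move=> j_k; rewrite card_imset // card_Xblock. Qed.

Lemma card_X_copy_centre : #|f @: Xcentre k| = 2%N.
Proof. by rewrite card_imset // card_Xcentre. Qed.

Hypotheses (G3 : is_3graph G) (freeG : hfree K43e G).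

(* An edge avoiding the centre meets each block in one of its two private
   vertices [2j, 2j+1]; halving tells the blocks apart, so [k <= 3]. *)
Lemma X_copy_centre_cover : (4 <= k)%N -> vertex_cover G (f @: Xcentre k).
Proof.
move=> k4 e eG; apply/negP => e_centre.
pose E := f @^-1: e.
have card_E : (#|E| <= 3)%N.
  rewrite -(G3 eG) -(card_imset E f_inj); apply: subset_leq_card.
  by apply/fintype.subsetP => ? /imsetP[i]; rewrite inE => ? ->.
pose half (i : 'I_(2 * k + 2)) : 'I_k.+1 := inord i./2.
have blocks_hit : [set j : 'I_k.+1 | (0 < j)%N] \subset half @: E.
  apply/fintype.subsetP => j; rewrite inE => j0.
  have jk : (0 < j <= k)%N by rewrite j0 -ltnS ltn_ord.
  have /pred0Pn[v /andP[ve /imsetP[i iB vfi]]] := K43e_free_meets_K4 G3 freeG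
    (card_X_copy_block jk) (X_copy_block_sub j0) eG.
  have i2 : (2 <= i)%N.
    have := disjointFr e_centre ve; rewrite vfi mem_imset // inE.
    by move=> /negbT; rewrite -leqNgt.
  apply/imsetP; exists i; first by rewrite inE -vfi.
  apply: val_inj; have := ltn_ord i; move: iB; rewrite inE /= => iB i_lt.
  rewrite inordK; lia.
have card_blocks : #|[set j : 'I_k.+1 | (0 < j)%N]| = k.
  have -> : [set j : 'I_k.+1 | (0 < j)%N] = [set~ ord0].
    by apply/setP => j; rewrite !inE lt0n.
  by rewrite cardsC1 card_ord.
have := leq_trans (subset_leq_card blocks_hit) (leq_imset_card half E).
by rewrite card_blocks; lia.
Qed.

End XCopy.

Theorem lemma5p10 (R : realType) (n : nat) (G : {set {set 'I_n}}) :
  is_3graph G -> dense R G -> hfree K43e G ->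
  Num.sqrt 3 / 18 < lambda R G ->
  hfree (X 4) G.
Proof.
move=> G3 _ freeG lambda_gt [f [f_inj f_copy]].
have cover := X_copy_centre_cover f_inj f_copy G3 freeG (leqnn 4).
have := lambda_le_vertex_cover2 R G3 cover (card_X_copy_centre f_inj).
by rewrite leNgt lambda_gt.
Qed.
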